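(* Let $c\in(0,1)$ and let $\sigma>0$ satisfy $C_{\mathrm{BS}}(\sigma)=c$. Define $$U_{23}(c)=H\!\left(\min\left(\frac{1+c}{2},\; c+e^k\,\Phi(-\sqrt{2k})\right)\right).$$ Then $\sigma\le U_{23}(c)$. Moreover, with $U_3(c)=-\Phi^{-1}\!\left(\frac{1-c}{2}\right)-\Phi^{-1}\!\left(\frac{1-c}{2e^k}\right)$ and, for $0<c<1-e^k\Phi(-\sqrt{2k})$, $U_2(c)=\Phi^{-1}\!\left(c+e^k\Phi(-\sqrt{2k})\right)+\sqrt{2k}$, one has $U_{23}(c)=\min(U_2(c),U_3(c))$ whenever $U_2(c)$ is defined, and $U_{23}(c)=U_3(c)$ otherwise.
   Context: Fix $k\ge 0$. Let $\Phi$ and $\phi$ denote the standard normal distribution function and density. For $\sigma>0$ put $d_1(\sigma)=-k/\sigma+\sigma/2$, $d_2(\sigma)=-k/\sigma-\sigma/2$, and $C_{\mathrm{BS}}(\sigma)=\Phi(d_1(\sigma))-e^k\,\Phi(d_2(\sigma))$. The map $C_{\mathrm{BS}}$ is a strictly increasing bijection from $(0,\infty)$ onto $(0,1)$; for $c\in(0,1)$ the implied volatility is the unique $\sigma>0$ with $C_{\mathrm{BS}}(\sigma)=c$. For $c<\mathcal D<1$ define $H(\mathcal D)=\Phi^{-1}(\mathcal D)-\Phi^{-1}\!\left(\frac{\mathcal D-c}{e^k}\right)$. *)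

From Stdlib Require Import Reals Lra ClassicalEpsilon.
From Coquelicot Require Import Coquelicot.
Open Scope R_scope.

Definition npdf (x : R) : R := exp (- (x ^ 2) / 2) / sqrt (2 * PI).

Definition Phi (x : R) : R := RInt_gen npdf (Rbar_locally m_infty) (at_point x).

(* inverse of Phi: the (unique, for p in (0,1)) y with Phi y = p *)
Definition Phi_inv (p : R) : R := epsilon (inhabits 0) (fun y => Phi y = p).

Definition d1 (k s : R) : R := - k / s + s / 2.
Definition d2 (k s : R) : R := - k / s - s / 2.

(* normalized Black-Scholes call price with log-moneyness k *)
Definition C_BS (k s : R) : R := Phi (d1 k s) - exp k * Phi (d2 k s).

Definition H (k c D : R) : R := Phi_inv D - Phi_inv ((D - c) / exp k).

Definition U23 (k c : R) : R :=
  H k c (Rmin ((1 + c) / 2) (c + exp k * Phi (- sqrt (2 * k)))).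

Definition U3 (k c : R) : R :=
  - Phi_inv ((1 - c) / 2) - Phi_inv ((1 - c) / (2 * exp k)).

(* meaningful for 0 < c < 1 - e^k Phi(-sqrt(2k)) *)
Definition U2 (k c : R) : R :=
  Phi_inv (c + exp k * Phi (- sqrt (2 * k))) + sqrt (2 * k).

(* Put C(t) = Phi t - e^k Phi (t - s).  Since
   C'(t) = npdf t * (1 - exp (k + t s - s^2/2)), C increases up to t = d1 and
   decreases afterwards, so C_BS k s is the maximum of C.  Hence
   Phi x - e^k Phi y = C_BS k s forces s <= x - y; with x = Phi_inv D and
   y = Phi_inv ((D - c)/e^k) this is s <= H D, for every D in (c, 1).
   The same unimodality shows that H is nondecreasing to the right of D as soon
   as y^2 <= x^2 + 2k at D.  This holds at D = c + e^k Phi(-sqrt(2k)), where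
   y = -sqrt(2k), and at D = (1 + c)/2 by the tail comparison
   e^k Phi(-sqrt(x^2 + 2k)) <= Phi(-x); so H at the smaller of the two points
   is the smaller of U2 and U3.  Identifying Phi with 1/2 + int_0^x npdf needs
   the Gaussian integral, taken from MathComp-Analysis. *)

From Stdlib Require Import Reals Lra.

Module GaussianIntegral.

From HB Require Import structures.
From mathcomp Require Import all_boot order ssralg ssrnum archimedean interval.
From mathcomp Require Import boolp classical_sets reals topology normedtype.
From mathcomp Require Import realfun derive exp trigo lebesgue_integral ftc gauss_integral.
From mathcomp Require Import Rstruct Rstruct_topology.

Import Order.TTheory GRing.Theory Num.Theory.
Import numFieldNormedType.Exports.
Local Open Scope classical_set_scope.
Local Open Scope ring_scope.

HB.instance Definition _ := NormedModule.copy Rdefinitions.R (Rdefinitions.R^o).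

Lemma is_derive_derivable_pt_lim (f : R -> R) (x l : R) :
  derivable_pt_lim f x l -> is_derive x 1 f l.
Proof.
move=> fl.
have quotient_cvg : (fun h : R => h^-1 * (f (h + x) - f x)) @ 0^' --> l.
  apply/cvgrPdist_lt => e /RltP e0.
  have [d Hd] := fl e e0.
  apply/nbhs_ballP; exists (pos d) => /=; first by apply/RltP; case: d {Hd}.
  move=> h; rewrite /ball /= sub0r normrN => /RltP hd hn0.
  have /RltP := Hd h (elimN eqP hn0) hd.
  by rewrite RabsE (addrC h x) mulrC distrC.
have E : (fun h : R => h^-1 *: ((f \o shift x) (h *: (1 : R^o)) - f x)) =
          (fun h : R => h^-1 * (f (h + x) - f x)).
  by apply/funext => h; rewrite /= [h%:A]mulr1.
apply: DeriveDef; rewrite /derivable /derive /= E; last exact: cvg_lim.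
by apply/cvg_ex; exists l.
Qed.

(* The two arctangents have the same derivative and agree at 0, hence at 1. *)
Lemma PI_eq_pi : PI = pi :> R.
Proof.
have Ratan' (x : R) : is_derive x 1 Ratan.atan ((1 + x ^+ 2)^-1).
  apply: is_derive_derivable_pt_lim.
  by have := derivable_pt_lim_atan x; rewrite /Rsqr /Rdiv RealsE RpowE.
have atan' (x : R) : is_derive x 1 (@atan R) ((1 + x ^+ 2)^-1).
  by apply: DeriveDef; [exact: derivable_atan | rewrite -derive1E derive1_atan].
pose g y := Ratan.atan y - @atan R y.
have g'0 (x : R) : is_derive x 1 g 0.
  by rewrite -(subrr ((1 + x ^+ 2)^-1)); exact: is_deriveB.
have gc : {within `[0, 1], continuous g}.
  by apply: derivable_within_continuous => x _; exact: (@ex_derive _ _ _ _ _ _ _ (g'0 x)).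
have [c _] := MVT ltr01 (fun x _ => g'0 x) gc.
rewrite mul0r /g atan1 atan0 atan_1 atan_0 subrr subr0 => /eqP.
rewrite subr_eq0 -INRE => /eqP E.
have : Rdiv PI 4 = Rdiv pi (INR 4) by exact: E.
simpl INR; lra.
Qed.

Lemma primitive_gauss_sqr_cvg (F : R -> R) :
  (forall x, derivable_pt_lim F x (Rtrigo_def.exp (- (x * x)))) -> F 0 = 0 ->
  forall eps, Rlt 0 eps -> exists M, forall x, Rlt M x ->
    Rlt (Rabs (F x * F x - PI / 4)) eps.
Proof.
move=> F' F0 eps /RltP eps0.
have F'g (x : R) : is_derive x 1 F (gauss_fun x).
  by apply: is_derive_derivable_pt_lim; rewrite /gauss_fun -RexpE expr2; exact: F'.
have Fc (x : R) : {for x, continuous F}.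
  by apply/continuity_ptE; apply: derivable_continuous_pt; exact: exist _ _ (F' x).
have gaussF (b : R) : 0 < b -> gauss_integral_proof.integral0_gauss b = F b.
  move=> b0.
  have Fb := @continuous_FTC2 R gauss_fun F 0 b b0
    (continuous_subspaceT continuous_gauss_fun).
  rewrite /gauss_integral_proof.integral0_gauss /Rintegral Fb ?F0 -?EFinB /= ?subr0 //.
    split; first by move=> x _; exact: (@ex_derive _ _ _ _ _ _ _ (F'g x)).
    - exact: cvg_at_right_filter (Fc 0).
    - exact: cvg_at_left_filter (Fc b).
  by move=> x _; rewrite derive1E; exact: derive_val.
have /cvgrPdist_lt/(_ eps eps0) [M [_ HM]] := @gauss_integral_proof.cvg_integral0_gauss_sqr R.
exists (Num.max M 0) => x /RltP; rewrite gt_max => /andP[Mx x0].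
have := HM x Mx; rewrite gaussF // -PI_eq_pi distrC => H.
have four : (4%:R : R) = IZR 4 by rewrite -INRE /=; ring.
by apply/RltP; rewrite RabsE expr2 four in H *.
Qed.

End GaussianIntegral.

From Stdlib Require Import Reals Lra ClassicalEpsilon.
From Coquelicot Require Import Coquelicot.
Open Scope R_scope.

Lemma sqrt_2PI_gt0 : 0 < sqrt (2 * PI).
Proof. apply sqrt_lt_R0; generalize PI_RGT_0; lra. Qed.

Lemma npdf_gt0 x : 0 < npdf x.
Proof. apply Rdiv_lt_0_compat; [apply exp_pos | apply sqrt_2PI_gt0]. Qed.

Lemma npdf_opp x : npdf (- x) = npdf x.
Proof. unfold npdf; f_equal; f_equal; field. Qed.

Lemma continuous_npdf x : continuous npdf x.
Proof.
  apply (ex_derive_continuous npdf); unfold npdf; auto_derive.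
  generalize sqrt_2PI_gt0; lra.
Qed.

Lemma ex_RInt_npdf a b : ex_RInt npdf a b.
Proof. apply (ex_RInt_continuous npdf); intros; apply continuous_npdf. Qed.

Lemma is_derive_ge0_le (f df : R -> R) a b : a <= b ->
  (forall x, a <= x <= b -> is_derive f x (df x)) ->
  (forall x, a <= x <= b -> 0 <= df x) -> f a <= f b.
Proof.
  intros [ab | <-] f' df0; [|lra].
  destruct (MVT_cor3 f df a b ab) as (c & ac & cb & E).
  - intros x ax xb; apply is_derive_Reals, f'; lra.
  - specialize (df0 c (conj ac cb)); nra.
Qed.

Definition npdf_int (x : R) : R := RInt npdf 0 x.

Lemma is_derive_npdf_int x : is_derive npdf_int x (npdf x).
Proof.
  apply is_derive_RInt with (a := 0); [|apply continuous_npdf].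
  apply filter_forall; intros b; exact (RInt_correct npdf 0 b (ex_RInt_npdf 0 b)).
Qed.

Lemma npdf_int_opp x : npdf_int (- x) = - npdf_int x.
Proof.
  unfold npdf_int.
  replace 0 with (-1 * 0 + 0) at 1 by ring.
  replace (- x) with (-1 * x + 0) by ring.
  rewrite <- RInt_comp_lin by apply ex_RInt_npdf.
  change (- RInt npdf 0 x) with (opp (RInt npdf 0 x)).
  rewrite <- RInt_opp by apply ex_RInt_npdf.
  apply RInt_ext; intros y _.
  replace (-1 * y + 0) with (- y) by ring; rewrite npdf_opp.
  unfold scal; simpl; unfold mult; simpl; unfold opp; simpl; ring.
Qed.

Lemma npdf_int_ge0 x : 0 <= x -> 0 <= npdf_int x.
Proof.
  intros x0; unfold npdf_int.
  apply RInt_ge_0; auto using ex_RInt_npdf.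
  intros; left; apply npdf_gt0.
Qed.

Lemma Rabs_sub_mul_le_sqr u s : 0 <= u -> 0 < s ->
  Rabs (u - s) * s <= Rabs (u * u - s * s).
Proof.
  intros u0 s0.
  replace (u * u - s * s) with ((u - s) * (u + s)) by ring.
  rewrite Rabs_mult, (Rabs_pos_eq (u + s)) by lra.
  apply Rmult_le_compat_l; [apply Rabs_pos | lra].
Qed.

Lemma derivable_pt_lim_gauss_primitive x :
  derivable_pt_lim (fun x => sqrt PI * npdf_int (sqrt 2 * x)) x (exp (- (x * x))).
Proof.
  assert (sqrt2_gt0 : 0 < sqrt 2) by (apply sqrt_lt_R0; lra).
  assert (sqrtPI_gt0 : 0 < sqrt PI) by (apply sqrt_lt_R0, PI_RGT_0).
  apply is_derive_Reals.
  replace (exp (- (x * x))) with (sqrt PI * (sqrt 2 * npdf (sqrt 2 * x))).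
  - apply @is_derive_scal, (is_derive_comp npdf_int (fun x => sqrt 2 * x)).
    + apply is_derive_npdf_int.
    + auto_derive; auto; ring.
  - unfold npdf; rewrite sqrt_mult by (generalize PI_RGT_0; lra).
    replace ((sqrt 2 * x) ^ 2) with (sqrt 2 * sqrt 2 * (x * x)) by ring.
    rewrite sqrt_sqrt by lra.
    replace (- (2 * (x * x)) / 2) with (- (x * x)) by field; field; lra.
Qed.

Lemma npdf_int_cvg_half eps : 0 < eps ->
  exists M, forall x, M < x -> Rabs (npdf_int x - 1/2) < eps.
Proof.
  intros eps0.
  assert (sqrt2_gt0 : 0 < sqrt 2) by (apply sqrt_lt_R0; lra).
  assert (sqrtPI_gt0 : 0 < sqrt PI) by (apply sqrt_lt_R0, PI_RGT_0).
  set (F x := sqrt PI * npdf_int (sqrt 2 * x)).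
  assert (F0 : F 0 = 0).
  { unfold F, npdf_int; rewrite Rmult_0_r, RInt_point; unfold zero; simpl; ring. }
  set (s := sqrt PI / 2).
  destruct (GaussianIntegral.primitive_gauss_sqr_cvg F derivable_pt_lim_gauss_primitive F0
    (eps * sqrt PI * s)) as [M HM].
  { unfold s; apply Rmult_lt_0_compat; [apply Rmult_lt_0_compat|]; lra. }
  exists (Rmax 0 (sqrt 2 * M)); intros y My.
  assert (y0 : 0 <= y) by (generalize (Rmax_l 0 (sqrt 2 * M)); lra).
  assert (Mx : M < y / sqrt 2).
  { apply Rmult_lt_reg_l with (sqrt 2); auto.
    replace (sqrt 2 * (y / sqrt 2)) with y by (field; lra).
    generalize (Rmax_r 0 (sqrt 2 * M)); lra. }
  assert (Fy : F (y / sqrt 2) = sqrt PI * npdf_int y).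
  { unfold F; do 2 f_equal; field; lra. }
  specialize (HM _ Mx); rewrite Fy in HM.
  assert (ss : s * s = PI / 4).
  { unfold s; transitivity (sqrt PI * sqrt PI / 4); [field|].
    rewrite sqrt_sqrt by (generalize PI_RGT_0; lra); reflexivity. }
  rewrite <- ss in HM.
  assert (Hs := Rabs_sub_mul_le_sqr (sqrt PI * npdf_int y) s).
  replace (sqrt PI * npdf_int y - s) with (sqrt PI * (npdf_int y - 1/2)) in Hs
    by (unfold s; field).
  rewrite Rabs_mult, (Rabs_pos_eq (sqrt PI)) in Hs by lra.
  assert (Fy0 : 0 <= sqrt PI * npdf_int y)
    by (apply Rmult_le_pos; [lra | apply npdf_int_ge0; lra]).
  assert (s0 : 0 < s) by (unfold s; lra).
  specialize (Hs Fy0 s0).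
  apply Rmult_lt_reg_l with (sqrt PI * s); nra.
Qed.

Lemma half_add_npdf_int_small eps : 0 < eps ->
  exists M, forall x, x < M -> Rabs (1/2 + npdf_int x) < eps.
Proof.
  intros eps0; destruct (npdf_int_cvg_half eps eps0) as [M HM].
  exists (- M); intros x xM.
  replace (1/2 + npdf_int x) with (- (npdf_int (- x) - 1/2)) by (rewrite npdf_int_opp; ring).
  rewrite Rabs_Ropp; apply HM; lra.
Qed.

Lemma Phi_npdf_int x : Phi x = 1/2 + npdf_int x.
Proof.
  set (P y := 1/2 + npdf_int y).
  assert (P' : forall y, is_derive P y (npdf y)).
  { intros y; unfold P; rewrite <- (Rplus_0_l (npdf y)).
    apply @is_derive_plus; [apply @is_derive_const | apply is_derive_npdf_int]. }
  apply is_RInt_gen_unique.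
  replace (1/2 + npdf_int x) with (P x - 0) by (unfold P; ring).
  apply is_RInt_gen_ext with (Derive P).
  { exists (fun _ => True) (fun _ => True); [exists 0; auto | unfold at_point; auto |].
    intros; apply is_derive_unique, P'. }
  apply is_RInt_gen_Derive.
  - exists (fun _ => True) (fun _ => True); [exists 0; auto | unfold at_point; auto |].
    intros; eexists; apply P'.
  - exists (fun _ => True) (fun _ => True); [exists 0; auto | unfold at_point; auto |].
    intros a b _ _ y _; apply (continuous_ext npdf); [|apply continuous_npdf].
    intros t; symmetry; apply is_derive_unique, P'.
  - apply filterlim_locally; intros eps.
    destruct (half_add_npdf_int_small eps (cond_pos eps)) as [M HM].
    exists M; intros y My.
    change (Rabs (P y - 0) < eps); rewrite Rminus_0_r; apply HM, My.
  - intros Q HQ; unfold filtermap, at_point; apply locally_singleton; exact HQ.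
Qed.

Lemma is_derive_Phi x : is_derive Phi x (npdf x).
Proof.
  apply is_derive_ext with (fun y => 1/2 + npdf_int y).
  - intros y; symmetry; apply Phi_npdf_int.
  - rewrite <- (Rplus_0_l (npdf x)).
    apply @is_derive_plus; [apply @is_derive_const | apply is_derive_npdf_int].
Qed.

Lemma Phi_opp x : Phi (- x) = 1 - Phi x.
Proof. rewrite !Phi_npdf_int, npdf_int_opp; lra. Qed.

Lemma Phi_lt a b : a < b -> Phi a < Phi b.
Proof.
  intros ab; apply (incr_function Phi m_infty p_infty npdf); simpl; auto.
  - intros; apply is_derive_Phi.
  - intros; apply npdf_gt0.
Qed.

Lemma Phi_le_inv a b : Phi a <= Phi b -> a <= b.
Proof. intros H; apply Rnot_lt_le; intros ba; apply Phi_lt in ba; lra. Qed.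

Lemma Phi_small eps : 0 < eps -> exists M, forall x, x < M -> Rabs (Phi x) < eps.
Proof.
  intros eps0; destruct (half_add_npdf_int_small eps eps0) as [M HM].
  exists M; intros x xM; rewrite Phi_npdf_int; apply HM, xM.
Qed.

Lemma Phi_gt0 x : 0 < Phi x.
Proof.
  assert (Phi_ge0 : forall y, 0 <= Phi y).
  { intros y; apply Rnot_lt_le; intros Hy.
    destruct (Phi_small (- Phi y)) as [M HM]; [lra|].
    set (z := Rmin M y - 1).
    assert (Phi z < Phi y) by (apply Phi_lt; unfold z; generalize (Rmin_r M y); lra).
    assert (Hz : Rabs (Phi z) < - Phi y) by (apply HM; unfold z; generalize (Rmin_l M y); lra).
    apply Rabs_def2 in Hz; lra. }
  generalize (Phi_ge0 (x - 1)) (Phi_lt (x - 1) x ltac:(lra)); lra.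
Qed.

Lemma Phi_lt1 x : Phi x < 1.
Proof. generalize (Phi_gt0 (- x)); rewrite Phi_opp; lra. Qed.

Lemma Phi_surj p : 0 < p < 1 -> exists y, Phi y = p.
Proof.
  intros p01.
  destruct (Phi_small p) as [M1 H1]; [lra|].
  destruct (Phi_small (1 - p)) as [M2 H2]; [lra|].
  assert (lo : Phi (M1 - 1) < p).
  { assert (H := H1 (M1 - 1) ltac:(lra)); apply Rabs_def2 in H; lra. }
  assert (hi : p < Phi (1 - M2)).
  { assert (H := H2 (M2 - 1) ltac:(lra)); apply Rabs_def2, proj1 in H.
    rewrite <- (Ropp_involutive (M2 - 1)), Phi_opp in H.
    replace (- (M2 - 1)) with (1 - M2) in H by ring; lra. }
  assert (Phi_cont : continuity Phi).
  { intros y; apply continuity_pt_filterlim.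
    exact (ex_derive_continuous Phi y (ex_intro _ _ (is_derive_Phi y))). }
  destruct (IVT_gen Phi (M1 - 1) (1 - M2) p Phi_cont) as [y [_ Hy]].
  - split; [apply Rle_trans with (Phi (M1 - 1)); [apply Rmin_l | lra]
           |apply Rle_trans with (Phi (1 - M2)); [lra | apply Rmax_r]].
  - exists y; exact Hy.
Qed.

Lemma Phi_Phi_inv p : 0 < p < 1 -> Phi (Phi_inv p) = p.
Proof. intros p01; apply (epsilon_spec (inhabits 0) (fun y => Phi y = p)), Phi_surj, p01. Qed.

Lemma Phi_inv_Phi y : Phi_inv (Phi y) = y.
Proof.
  assert (E : Phi (Phi_inv (Phi y)) = Phi y) by (apply Phi_Phi_inv; split; [apply Phi_gt0 | apply Phi_lt1]).
  apply Rle_antisym; apply Phi_le_inv; lra.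
Qed.

Lemma exp_le_compat a b : a <= b -> exp a <= exp b.
Proof. intros [ab | <-]; [left; apply exp_increasing, ab | lra]. Qed.

Definition call_d (k s t : R) : R := Phi t - exp k * Phi (t - s).

Lemma exp_mul_npdf_sub k s t :
  exp k * npdf (t - s) = npdf t * exp (k + t * s - s * s / 2).
Proof.
  unfold npdf, Rdiv.
  replace (exp k * (exp (- (t - s) ^ 2 * / 2) * / sqrt (2 * PI)))
    with (exp (k + - (t - s) ^ 2 * / 2) * / sqrt (2 * PI)) by (rewrite exp_plus; ring).
  replace (exp (- t ^ 2 * / 2) * / sqrt (2 * PI) * exp (k + t * s - s * s * / 2))
    with (exp (- t ^ 2 * / 2 + (k + t * s - s * s * / 2)) * / sqrt (2 * PI))
    by (rewrite exp_plus; ring).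
  f_equal; f_equal; field.
Qed.

Lemma is_derive_call_d k s t :
  is_derive (call_d k s) t (npdf t * (1 - exp (k + t * s - s * s / 2))).
Proof.
  rewrite Rmult_minus_distr_l, Rmult_1_r, <- exp_mul_npdf_sub.
  apply @is_derive_minus; [apply is_derive_Phi|].
  rewrite <- (Rmult_1_l (npdf (t - s))).
  apply @is_derive_scal, (is_derive_comp Phi (fun t => t - s)).
  - apply is_derive_Phi.
  - auto_derive; auto; ring.
Qed.

Lemma call_d_le_incr k s a b : 0 <= s -> a <= b -> k + b * s - s * s / 2 <= 0 ->
  call_d k s a <= call_d k s b.
Proof.
  intros s0 ab hb.
  apply (is_derive_ge0_le _ (fun t => npdf t * (1 - exp (k + t * s - s * s / 2))) a b ab).
  { intros; apply is_derive_call_d. }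
  intros x [_ xb].
  assert (exp (k + x * s - s * s / 2) <= 1) by (rewrite <- exp_0; apply exp_le_compat; nra).
  generalize (npdf_gt0 x); nra.
Qed.

Lemma call_d_le_decr k s a b : 0 <= s -> a <= b -> 0 <= k + a * s - s * s / 2 ->
  call_d k s b <= call_d k s a.
Proof.
  intros s0 ab ha.
  apply Ropp_le_cancel.
  apply (is_derive_ge0_le (fun t => - call_d k s t)
    (fun t => - (npdf t * (1 - exp (k + t * s - s * s / 2)))) a b ab).
  - intros; apply @is_derive_opp, is_derive_call_d.
  - intros x [ax _].
    assert (1 <= exp (k + x * s - s * s / 2)) by (rewrite <- exp_0; apply exp_le_compat; nra).
    generalize (npdf_gt0 x); nra.
Qed.

Lemma call_d_le_C_BS k s t : 0 < s -> call_d k s t <= C_BS k s.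
Proof.
  intros s0.
  assert (d1_crit : k + d1 k s * s - s * s / 2 = 0) by (unfold d1; field; lra).
  replace (C_BS k s) with (call_d k s (d1 k s))
    by (unfold C_BS, call_d; replace (d2 k s) with (d1 k s - s) by (unfold d1, d2; field; lra); ring).
  destruct (Rle_lt_dec t (d1 k s)).
  - apply call_d_le_incr; lra.
  - apply call_d_le_decr; lra.
Qed.

Lemma call_d_ge0 k s t : 0 <= s -> k + t * s - s * s / 2 <= 0 -> 0 <= call_d k s t.
Proof.
  intros s0 ht; apply Rnot_lt_le; intros neg.
  assert (ek := exp_pos k).
  destruct (Phi_small (- call_d k s t / exp k)) as [M HM].
  { apply Rdiv_lt_0_compat; lra. }
  set (a := Rmin t (M + s) - 1).
  assert (at_ : a <= t) by (unfold a; generalize (Rmin_l t (M + s)); lra).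
  assert (HPhi := HM (a - s) ltac:(unfold a; generalize (Rmin_r t (M + s)); lra)).
  apply Rabs_def2, proj1 in HPhi.
  assert (exp k * Phi (a - s) < - call_d k s t).
  { apply Rmult_lt_compat_l with (r := exp k) in HPhi; [|lra].
    replace (exp k * (- call_d k s t / exp k)) with (- call_d k s t) in HPhi by (field; lra).
    exact HPhi. }
  generalize (call_d_le_incr k s a t s0 at_ ht) (Phi_gt0 a); unfold call_d at 1; lra.
Qed.

Lemma le_sub_of_call_d_le k s x y :
  call_d k s x <= Phi x - exp k * Phi y -> s <= x - y.
Proof.
  unfold call_d; intros Hx.
  assert (Phi y <= Phi (x - s)).
  { apply Rmult_le_reg_l with (exp k); [apply exp_pos | lra]. }
  apply Phi_le_inv in H; lra.
Qed.

Lemma implied_vol_le_sub k s x y :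
  0 < s -> Phi x - exp k * Phi y = C_BS k s -> s <= x - y.
Proof.
  intros s0 E; apply (le_sub_of_call_d_le k); rewrite E.
  apply call_d_le_C_BS, s0.
Qed.

Lemma sub_le_sub_of_call_eq k x y x' y' :
  Phi x - exp k * Phi y = Phi x' - exp k * Phi y' ->
  y <= x -> x <= x' -> y * y <= x * x + 2 * k -> x - y <= x' - y'.
Proof.
  intros E yx xx' Hy.
  apply (le_sub_of_call_d_le k); rewrite <- E.
  replace (Phi x - exp k * Phi y) with (call_d k (x - y) x)
    by (unfold call_d; do 3 f_equal; ring).
  apply call_d_le_decr; nra.
Qed.

Lemma exp_mul_Phi_le_tail k x : 0 <= k -> 0 <= x ->
  exp k * Phi (- sqrt (x * x + 2 * k)) <= Phi (- x).
Proof.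
  intros k0 x0.
  set (z := sqrt (x * x + 2 * k)).
  assert (zz : z * z = x * x + 2 * k) by (apply sqrt_sqrt; nra).
  assert (xz : x <= z) by (generalize (sqrt_pos (x * x + 2 * k)); fold z; nra).
  assert (H := call_d_ge0 k (z - x) (- x) ltac:(lra) ltac:(nra)).
  unfold call_d in H; replace (- x - (z - x)) with (- z) in H by ring; lra.
Qed.

Section ImpliedVolatilityBound.

Variables k c : R.
Hypothesis k_ge0 : 0 <= k.
Hypothesis c_gt0 : 0 < c.
Hypothesis c_lt1 : c < 1.

Let exp_k_ge1 : 1 <= exp k.
Proof. rewrite <- exp_0; apply exp_le_compat, k_ge0. Qed.

Lemma Phi_Phi_inv_div_exp D : c < D < 1 ->
  Phi (Phi_inv ((D - c) / exp k)) = (D - c) / exp k.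
Proof.
  intros HD; apply Phi_Phi_inv; split.
  - apply Rdiv_lt_0_compat; [lra | apply exp_pos].
  - apply Rmult_lt_reg_r with (exp k); [apply exp_pos|].
    unfold Rdiv; rewrite Rmult_assoc, Rinv_l by (apply Rgt_not_eq, exp_pos); nra.
Qed.

Lemma call_Phi_inv D : c < D < 1 ->
  Phi (Phi_inv D) - exp k * Phi (Phi_inv ((D - c) / exp k)) = c.
Proof.
  intros HD; rewrite Phi_Phi_inv_div_exp, Phi_Phi_inv by lra.
  field; apply Rgt_not_eq, exp_pos.
Qed.

Lemma Phi_inv_div_exp_le D : c < D < 1 -> Phi_inv ((D - c) / exp k) <= Phi_inv D.
Proof.
  intros HD; apply Phi_le_inv; rewrite Phi_Phi_inv_div_exp, Phi_Phi_inv by lra.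
  apply Rmult_le_reg_r with (exp k); [apply exp_pos|].
  unfold Rdiv; rewrite Rmult_assoc, Rinv_l by (apply Rgt_not_eq, exp_pos); nra.
Qed.

Lemma implied_vol_le_H s D : 0 < s -> C_BS k s = c -> c < D < 1 -> s <= H k c D.
Proof.
  intros s0 Hs HD; apply (implied_vol_le_sub k); auto.
  rewrite Hs; apply call_Phi_inv, HD.
Qed.

Lemma H_le_H D D' : c < D <= D' -> D' < 1 ->
  Phi_inv ((D - c) / exp k) * Phi_inv ((D - c) / exp k) <= Phi_inv D * Phi_inv D + 2 * k ->
  H k c D <= H k c D'.
Proof.
  intros HD HD' Hy; apply (sub_le_sub_of_call_eq k); auto.
  - rewrite !call_Phi_inv by lra; reflexivity.
  - apply Phi_inv_div_exp_le; lra.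
  - apply Phi_le_inv; rewrite !Phi_Phi_inv by lra; lra.
Qed.

Lemma H_eq_U2 : H k c (c + exp k * Phi (- sqrt (2 * k))) = U2 k c.
Proof.
  unfold H, U2.
  replace ((c + exp k * Phi (- sqrt (2 * k)) - c) / exp k) with (Phi (- sqrt (2 * k)))
    by (field; apply Rgt_not_eq, exp_pos).
  rewrite Phi_inv_Phi; ring.
Qed.

Lemma H_eq_U3 : H k c ((1 + c) / 2) = U3 k c.
Proof.
  unfold H, U3.
  assert (E : Phi (- Phi_inv ((1 - c) / 2)) = (1 + c) / 2).
  { rewrite Phi_opp, Phi_Phi_inv; lra. }
  rewrite <- E at 1; rewrite Phi_inv_Phi.
  replace (((1 + c) / 2 - c) / exp k) with ((1 - c) / (2 * exp k))
    by (field; apply Rgt_not_eq, exp_pos).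
  ring.
Qed.

Lemma H_D2_le_H D : c + exp k * Phi (- sqrt (2 * k)) <= D < 1 ->
  H k c (c + exp k * Phi (- sqrt (2 * k))) <= H k c D.
Proof.
  intros HD.
  assert (c < c + exp k * Phi (- sqrt (2 * k)))
    by (generalize (exp_pos k) (Phi_gt0 (- sqrt (2 * k))); nra).
  apply H_le_H; try lra.
  replace ((c + exp k * Phi (- sqrt (2 * k)) - c) / exp k) with (Phi (- sqrt (2 * k)))
    by (field; apply Rgt_not_eq, exp_pos).
  rewrite Phi_inv_Phi.
  replace (- sqrt (2 * k) * - sqrt (2 * k)) with (2 * k) by (rewrite Rmult_opp_opp, sqrt_sqrt; lra).
  nra.
Qed.

Lemma H_D3_le_H D : (1 + c) / 2 <= D < 1 -> H k c ((1 + c) / 2) <= H k c D.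
Proof.
  intros HD.
  apply H_le_H; try lra.
  set (x := Phi_inv ((1 + c) / 2)).
  set (y := Phi_inv (((1 + c) / 2 - c) / exp k)).
  assert (Px : Phi x = (1 + c) / 2) by (apply Phi_Phi_inv; lra).
  assert (Py : exp k * Phi y = Phi (- x)).
  { unfold y; rewrite Phi_Phi_inv_div_exp, Phi_opp, Px by lra.
    field; apply Rgt_not_eq, exp_pos. }
  assert (x0 : 0 <= x).
  { apply Phi_le_inv; rewrite Px.
    generalize (Phi_opp 0); rewrite Ropp_0; lra. }
  assert (yx : y <= - x).
  { apply Phi_le_inv; rewrite <- Py; generalize (Phi_gt0 y); nra. }
  set (z := sqrt (x * x + 2 * k)).
  assert (zy : - z <= y).
  { apply Phi_le_inv, Rmult_le_reg_l with (exp k); [apply exp_pos|].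
    rewrite Py; apply exp_mul_Phi_le_tail; lra. }
  assert (zz : z * z = x * x + 2 * k) by (apply sqrt_sqrt; nra).
  nra.
Qed.

End ImpliedVolatilityBound.

Theorem corollary4p1 (k c : R) (hk : 0 <= k) (hc0 : 0 < c) (hc1 : c < 1) :
  (forall sigma : R, 0 < sigma -> C_BS k sigma = c -> sigma <= U23 k c) /\
  (c < 1 - exp k * Phi (- sqrt (2 * k)) -> U23 k c = Rmin (U2 k c) (U3 k c)) /\
  (~ (c < 1 - exp k * Phi (- sqrt (2 * k))) -> U23 k c = U3 k c).
Proof.
  unfold U23; rewrite <- (H_eq_U2 k c), <- (H_eq_U3 k c hc0 hc1).
  set (D2 := c + exp k * Phi (- sqrt (2 * k))).
  set (D3 := (1 + c) / 2).
  assert (c < D2) by (unfold D2; generalize (exp_pos k) (Phi_gt0 (- sqrt (2 * k))); nra).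
  split; [|split].
  - intros s s0 Hs; apply (implied_vol_le_H k c hk hc0 s); auto.
    split; [apply Rmin_glb_lt | apply Rle_lt_trans with D3; [apply Rmin_l|]]; unfold D3; lra.
  - intros D2_lt1; destruct (Rle_lt_dec D2 D3) as [D23 | D32].
    + rewrite (Rmin_right D3 D2) by lra.
      rewrite Rmin_left; [reflexivity |].
      apply (H_D2_le_H k c); fold D2; unfold D2, D3 in *; lra.
    + rewrite (Rmin_left D3 D2) by lra.
      rewrite Rmin_right; [reflexivity |].
      apply (H_D3_le_H k c); fold D3; unfold D2, D3 in *; lra.
  - intros D2_ge1; rewrite Rmin_left; [reflexivity | unfold D2, D3 in *; lra].
Qed.
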